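(* Let $(\mathcal{P},\mathcal{L})$ be a $(6,4)$ net, and let $\mathcal{C}$ be its binary code, i.e. the $\mathbb{F}_2$-subspace of $\mathbb{F}_2^{\mathcal{P}}$ spanned by the characteristic functions $v^{\lambda}$ of the lines $\lambda\in\mathcal{L}$. Then $\dim_{\mathbb{F}_2}\mathcal{C}\le 20$.
   Context: An $(n,k)$ net is a pair $(\mathcal{P},\mathcal{L})$ where $\mathcal{P}$ is a set of $n^2$ points and $\mathcal{L}$ is a collection of $n$-element subsets of $\mathcal{P}$ (lines) such that: (1) $\mathcal{L}$ is the disjoint union of $k$ parallel classes, each of which is a partition of $\mathcal{P}$ into $n$ lines; (2) two lines from different parallel classes meet in exactly one point. $\mathbb{F}_2^{\mathcal{P}}$ denotes the $\mathbb{F}_2$-vector space of functions $\mathcal{P}\to\mathbb{F}_2$, and for $X\subseteq\mathcal{P}$, $v^X$ is the characteristic function of $X$. *)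

From HB Require Import structures.
From mathcomp Require Import all_boot all_order all_algebra.
Set Implicit Arguments. Unset Strict Implicit. Unset Printing Implicit Defensive.
Import GRing.Theory.

(* L is the disjoint union of k parallel classes cls i (i : 'I_k), each a
   partition of P into n lines; lines are n-element subsets; lines from
   different parallel classes meet in exactly one point; #|P| = n^2. *)
Definition is_net (n k : nat) (P : finType) (L : {set {set P}}) : Prop :=
  #|P| = (n ^ 2)%N /\
  (forall l, l \in L -> #|l| = n) /\
  exists cls : 'I_k -> {set {set P}},
    [/\ (forall i, partition (cls i) [set: P]),
        (forall i, #|cls i| = n),
        (forall i j, i != j -> [disjoint cls i & cls j]),
        L = \bigcup_(i < k) cls i
      & (forall i j, i != j -> forall l m, l \in cls i -> m \in cls j ->
            #|l :&: m| = 1%N)].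

Notation F2fun P := {ffun P -> ('F_2)^o}%type.

Local Open Scope ring_scope.
Definition charfun (P : finType) (X : {set P}) : F2fun P :=
  [ffun x => if x \in X then 1 else 0].

Definition binary_code (P : finType) (L : {set {set P}}) : {vspace F2fun P} :=
  <<[seq charfun l | l <- enum L]>>%VS.

From HB Require Import structures.
From mathcomp Require Import all_boot all_order all_algebra.
Set Implicit Arguments. Unset Strict Implicit. Unset Printing Implicit Defensive.
Import GRing.Theory.
Local Open Scope ring_scope.

(* Let D be spanned by the sums v^l + v^m of two lines of the same parallel
   class.  For the standard dot product over F_2, D is orthogonal to every
   line h once lines have even size: if h lies in the class of l and m it
   meets each of them in an even number of points, otherwise it meets each
   of them exactly once.  Hence dim D + dim C <= |P|.  On the other hand C is
   spanned by D together with one line from each class, so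
   dim C <= dim D + k.  Adding up, 2 dim C <= |P| + k = 36 + 4. *)

Section DotProduct.
Variables (F : fieldType) (P : finType).
Implicit Types (x y : {ffun P -> F^o}) (U W : {vspace {ffun P -> F^o}}).

Definition fdot x y : F := \sum_p x p * y p.

Lemma fdotC x y : fdot x y = fdot y x.
Proof. by apply: eq_bigr => p _; rewrite mulrC. Qed.

Lemma fdotDl x x' y : fdot (x + x') y = fdot x y + fdot x' y.
Proof. by rewrite /fdot -big_split; apply: eq_bigr => p _; rewrite ffunE mulrDl. Qed.

Lemma fdot_sumZl n (c : 'I_n -> F) (X : 'I_n -> {ffun P -> F^o}) y :
  fdot (\sum_i c i *: X i) y = \sum_i c i * fdot (X i) y.
Proof.
rewrite /fdot; under eq_bigr do rewrite sum_ffunE mulr_suml.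
rewrite exchange_big; apply: eq_bigr => i _; rewrite mulr_sumr.
by apply: eq_bigr => p _; rewrite ffunE mulrA.
Qed.

Definition orthv U W := forall u w, u \in U -> w \in W -> fdot u w = 0.

Lemma orthv_span (X Y : seq {ffun P -> F^o}) :
  {in X & Y, forall x y, fdot x y = 0} -> orthv <<X>> <<Y>>.
Proof.
move=> XY u w Xu Yw.
rewrite (coord_span (Xu : u \in span (in_tuple X))) fdot_sumZl big1 // => i _.
rewrite fdotC (coord_span (Yw : w \in span (in_tuple Y))) fdot_sumZl big1 ?mulr0 //.
by move=> j _; rewrite fdotC XY ?mulr0 ?mem_nth.
Qed.

Definition vbasis_mx U : 'M[F]_(\dim U, #|P|) :=
  \matrix_(i, j) (vbasis U)`_i (enum_val j).

Lemma rank_vbasis_mx U : \rank (vbasis_mx U) = \dim U.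
Proof.
apply/eqP; rewrite -[_ == _]/(row_free _) -kermx_eq0; apply/rowV0P => v /sub_kermxP v0.
have combination0 : \sum_i v 0 i *: (vbasis U)`_i = 0.
  apply/ffunP => p; rewrite sum_ffunE ffunE.
  have /rowP/(_ (enum_rank p)) := v0; rewrite !mxE => v0p.
  by apply: etrans v0p; apply: eq_bigr => i _; rewrite ffunE mxE enum_rankK.
apply/rowP => i; rewrite mxE.
exact: (freeP (basis_free (vbasisP U)) _ combination0).
Qed.

Lemma dimv_orth U W : orthv U W -> (\dim U + \dim W <= #|P|)%N.
Proof.
move=> UW; rewrite -(rank_vbasis_mx U) -(rank_vbasis_mx W) -(mxrank_tr (vbasis_mx W)).
apply: mulmx0_rank_max; apply/matrixP => i j; rewrite !mxE.
rewrite -[RHS](UW (vbasis U)`_i (vbasis W)`_j) ?vbasis_mem ?mem_nth ?size_tuple //.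
rewrite /fdot [RHS](reindex _ (onW_bij _ (enum_val_bij P))).
by apply: eq_bigr => p _; rewrite !mxE.
Qed.

End DotProduct.

Lemma F2_natr_odd m : m%:R = (odd m)%:R :> 'F_2.
Proof. by rewrite -modn2 (Fp_nat_mod (isT : prime 2)). Qed.

Lemma fdot_charfun (P : finType) (l m : {set P}) :
  fdot (charfun l) (charfun m) = #|l :&: m|%:R.
Proof.
rewrite /fdot (eq_bigr (fun p => if p \in l :&: m then 1 else 0)).
  by rewrite -big_mkcond sumr_const.
by move=> p _; rewrite !ffunE inE; do 2!case: (_ \in _); rewrite ?mulr1 ?mulr0.
Qed.

Section NetCode.
Variables (P : finType) (k : nat) (cls : 'I_k -> {set {set P}}).
Hypothesis cls_trivI : forall i, trivIset (cls i).
Hypothesis line_even : forall i l, l \in cls i -> ~~ odd #|l|.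
Hypothesis cls_meet : forall i j, i != j -> forall l m,
  l \in cls i -> m \in cls j -> #|l :&: m| = 1%N.

Let lines := \bigcup_(i < k) cls i.
Let C := binary_code lines.

Lemma fdot_lines i j l m : l \in cls i -> m \in cls j ->
  fdot (charfun l) (charfun m) = (i != j)%:R.
Proof.
move=> li mj; rewrite fdot_charfun.
have [ij | ij] := eqVneq i j; last by rewrite (cls_meet ij li mj).
subst j; have [<-{m mj} | lm] := eqVneq l m.
  by rewrite setIid F2_natr_odd (negbTE (line_even li)).
by rewrite (disjoint_setI0 (trivIsetP (cls_trivI i) l m li mj lm)) cards0.
Qed.

Definition same_class_pairs : {set {set P} * {set P}} :=
  [set x | [exists i, (x.1 \in cls i) && (x.2 \in cls i)]].

Let D := <<[seq (charfun x.1 + charfun x.2)%R | x <- enum same_class_pairs]>>%VS.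

Lemma orthv_pairs_code : orthv D C.
Proof.
apply: orthv_span => _ _ /mapP[[l1 l2] + ->] /mapP[m + ->].
rewrite !mem_enum inE => /existsP[i /andP[l1i l2i]] /bigcupP[j _ mj].
by rewrite fdotDl (fdot_lines l1i mj) (fdot_lines l2i mj) addrr_pchar2 ?pchar_Fp.
Qed.

Definition class_rep i := odflt set0 [pick l in cls i].

Lemma class_rep_mem i l : l \in cls i -> class_rep i \in cls i.
Proof. by move=> li; rewrite /class_rep; case: pickP => [//| /(_ l)]; rewrite li. Qed.

Let R := <<[seq charfun (class_rep i) | i <- enum 'I_k]>>%VS.

Lemma dimv_class_reps : (\dim R <= k)%N.
Proof. by rewrite (leq_trans (dim_span _)) // size_map size_enum_ord. Qed.

Lemma code_sub_pairs_reps : (C <= D + R)%VS.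
Proof.
apply/span_subvP => _ /mapP[l /[!mem_enum] /bigcupP[i _ li] ->].
rewrite -(addrK (charfun (class_rep i)) (charfun l)) memv_add ?memvN //.
  apply/memv_span/mapP; exists (l, class_rep i) => //.
  by rewrite mem_enum inE; apply/existsP; exists i; rewrite li (class_rep_mem li).
by apply/memv_span/map_f; rewrite mem_enum.
Qed.

Lemma dim_net_code : ((\dim C).*2 <= #|P| + k)%N.
Proof.
have DC := dimv_orth orthv_pairs_code.
have CDR := leq_trans (dimvS code_sub_pairs_reps) (dimv_add_leqif D R).
by rewrite -addnn (leq_trans (leq_add CDR (leqnn _))) // addnAC leq_add ?dimv_class_reps.
Qed.

End NetCode.

Theorem mainTheorem1 (P : finType) (L : {set {set P}}) :
  is_net 6 4 L -> (\dim (binary_code L) <= 20)%N.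
Proof.
move=> [card_P [card_line [cls [cls_part _ _ L_def cls_meet]]]]; subst L.
have cls_trivI i : trivIset (cls i) by case/and3P: (cls_part i).
have line_even i l : l \in cls i -> ~~ odd #|l|.
  by move=> li; rewrite card_line //; apply/bigcupP; exists i.
rewrite -leq_double (leq_trans (dim_net_code cls_trivI line_even cls_meet)) //.
by rewrite card_P.
Qed.
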